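(* Let $(\mathcal Q,d)$ be a Hadamard space, $Y$ a $\mathcal Q$-valued random variable, $o\in\mathcal Q$, and $\tau\in\mathcal S_0^+$ with $\mathbb E[\tau'(d(Y,o))]<\infty$. Let $m\in\arg\min_{q\in\mathcal Q}\mathbb E[\tau(d(Y,q))-\tau(d(Y,o))]$ and $x_0:=\inf\{x\in(0,\infty):\tau'^{\oplus}(x)=0\}$ (with $\inf\emptyset=\infty$). If $\mathbb P(d(Y,m)<x_0)>0$, then $m$ is the only $\tau$-Fréchet mean of $Y$. In particular, if $\tau'^{\oplus}(x)>0$ for all $x\in(0,\infty)$, the $\tau$-Fréchet mean is unique.
   Context: A Hadamard space is a complete metric space $(\mathcal Q,d)$ such that for all $y_0,y_1$ there is $m$ with $\frac12 d(y_0,q)^2+\frac12 d(y_1,q)^2-\frac14 d(y_0,y_1)^2\ge d(q,m)^2$ for all $q$. $\mathcal S_0^+$ is the set of nondecreasing convex $\tau:[0,\infty)\to\mathbb R$, differentiable on $(0,\infty)$ with concave derivative $\tau'$ (with $\tau'(0):=\lim_{x\searrow0}\tau'(x)$), $\tau(0)=0$ and $\tau'(x)>0$ for $x>0$; $\tau'^{\oplus}$ is the right derivative of $\tau'$. A $\tau$-Fréchet mean of $Y$ is an element of $\arg\min_{q}\mathbb E[\tau(d(Y,q))-\tau(d(Y,o))]$. *)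

From HB Require Import structures.
From mathcomp Require Import all_boot all_order all_algebra.
From mathcomp Require Import all_classical all_reals all_analysis.
Set Implicit Arguments. Unset Strict Implicit. Unset Printing Implicit Defensive.
Import Order.TTheory GRing.Theory Num.Theory.
Import numFieldNormedType.Exports.
Local Open Scope classical_set_scope.
Local Open Scope ring_scope.

Section Defs.
Variable R : realType.

Definition is_metric (Q : Type) (d : Q -> Q -> R) : Prop :=
  (forall x y, 0 <= d x y) /\
  (forall x y, d x y = 0 <-> x = y) /\
  (forall x y, d x y = d y x) /\
  (forall x y z, d x z <= d x y + d y z).

Definition metric_complete (Q : Type) (d : Q -> Q -> R) : Prop :=
  forall u : nat -> Q,
    (forall e : R, 0 < e -> exists N : nat, forall m n : nat,
        (N <= m)%N -> (N <= n)%N -> d (u m) (u n) < e) ->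
    exists l : Q, (fun n => d (u n) l) @ \oo --> (0 : R).

Definition hadamard_space (Q : Type) (d : Q -> Q -> R) : Prop :=
  is_metric d /\ metric_complete d /\
  forall y0 y1 : Q, exists m : Q, forall q : Q,
    2^-1 * d y0 q ^+ 2 + 2^-1 * d y1 q ^+ 2 - 4^-1 * d y0 y1 ^+ 2
      >= d q m ^+ 2.

Definition metric_open (Q : Type) (d : Q -> Q -> R) (A : set Q) : Prop :=
  forall x, A x -> exists e : R, 0 < e /\ forall y, d x y < e -> A y.

Definition random_variable_in (dO : measure_display) (Omega : measurableType dO)
  (Q : Type) (d : Q -> Q -> R) (Y : Omega -> Q) : Prop :=
  forall A : set Q, metric_open d A -> measurable (Y @^-1` A).

Definition tau_d (tau : R -> R) (x : R) : R :=
  if 0 < x then (derive1 tau) x else lim ((derive1 tau) @ 0^'+).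

Definition rderiv (f : R -> R) (x : R) : R :=
  lim ((fun h : R => h^-1 * (f (x + h) - f x)) @ 0^'+).

Definition S0plus (tau : R -> R) : Prop :=
  (forall x y, 0 <= x -> x <= y -> tau x <= tau y) /\
  (forall x y t, 0 <= x -> 0 <= y -> 0 <= t <= 1 ->
     tau (t * x + (1 - t) * y) <= t * tau x + (1 - t) * tau y) /\
  (forall x, 0 < x -> derivable tau x 1) /\
  (forall x y t, 0 < x -> 0 < y -> 0 <= t <= 1 ->
     t * (derive1 tau) x + (1 - t) * (derive1 tau) y <= (derive1 tau) (t * x + (1 - t) * y)) /\
  tau 0 = 0 /\
  (forall x, 0 < x -> 0 < (derive1 tau) x).

Definition frechet_obj (dO : measure_display) (Omega : measurableType dO)
  (P : probability Omega R) (Q : Type) (d : Q -> Q -> R) (tau : R -> R)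
  (Y : Omega -> Q) (o q : Q) : \bar R :=
  (\int[P]_w (tau (d (Y w) q) - tau (d (Y w) o))%:E)%E.

Definition is_tau_frechet_mean (dO : measure_display) (Omega : measurableType dO)
  (P : probability Omega R) (Q : Type) (d : Q -> Q -> R) (tau : R -> R)
  (Y : Omega -> Q) (o m : Q) : Prop :=
  forall q : Q, (frechet_obj P d tau Y o m <= frechet_obj P d tau Y o q)%E.

Definition x0_of (tau : R -> R) : \bar R :=
  ereal_inf [set x%:E | x in [set x : R | 0 < x /\ rderiv (tau_d tau) x = 0]].

End Defs.

(* If m and m' are two tau-Frechet means, let z be the Hadamard midpoint of m and m'.
   The midpoint inequality and the triangle inequality give
   d(Y,z) <= (d(Y,m) + d(Y,m')) / 2, strictly when d(Y,m) = d(Y,m'), so by monotonicity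
   and convexity tau(d(Y,z)) <= (tau(d(Y,m)) + tau(d(Y,m'))) / 2.  Below x0 the function
   tau is strictly midpoint convex: equality would make tau affine on an interval, where
   the right derivative of tau' vanishes.  Hence the inequality is strict on the event
   {d(Y,m) < x0}, which has positive probability, and integrating shows that z does
   strictly better than the minimum value, a contradiction. *)

From HB Require Import structures.
From mathcomp Require Import all_boot all_order all_algebra.
From mathcomp Require Import all_classical all_reals all_analysis.
From mathcomp Require Import ring lra measurable_realfun.
Set Implicit Arguments.
Unset Strict Implicit.
Unset Printing Implicit Defensive.

Import Order.TTheory GRing.Theory Num.Theory.
Import numFieldNormedType.Exports.
Local Open Scope classical_set_scope.
Local Open Scope ring_scope.

Lemma lee_gt_itv (R : realFieldType) (e : \bar R) (a b : R) : a < b ->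
  (forall x, a < x < b -> (e <= x%:E)%E) -> (e <= a%:E)%E.
Proof.
move=> lt_ab le_e; apply/lee_addgt0Pr => eps eps_gt0.
have lt_min : 0 < Num.min eps (b - a) by rewrite lt_min eps_gt0 subr_gt0.
have min_le : Num.min eps (b - a) <= eps /\ Num.min eps (b - a) <= b - a.
  by split; rewrite ge_min lexx ?orbT.
apply: (le_trans (le_e (a + Num.min eps (b - a) / 2) _)).
  by apply/andP; split; lra.
by rewrite -EFinD lee_fin; lra.
Qed.

Lemma rderiv_near_cst (R : realType) (g : R -> R) (x : R) :
  (\forall h \near 0^'+, g (x + h) = g x) -> rderiv g x = 0.
Proof.
move=> g_cst; apply: cvg_lim => //; apply: cvg_near_cst.
by apply: filterS g_cst => h ->; rewrite subrr mulr0.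
Qed.

Section ConvexOnNonneg.
Variables (R : realType) (f : R -> R).
Hypothesis f_convex : forall x y t, 0 <= x -> 0 <= y -> 0 <= t <= 1 ->
  f (t * x + (1 - t) * y) <= t * f x + (1 - t) * f y.
Hypothesis f_derivable : forall x, 0 < x -> derivable f x 1.

Lemma convex_tangent_le x z : 0 < x -> 0 <= z -> f x + (z - x) * derive1 f x <= f z.
Proof.
move=> x_gt0 z_ge0; set v := z - x.
have df : differentiable f x by apply/derivable1_diffP/f_derivable.
have Dv : 'D_v f x = v * derive1 f x.
  by rewrite deriveE // (deriv1E (f_derivable x_gt0)).
suff : 'D_v f x <= f z - f x by rewrite Dv; lra.
have /cvg_dnbhs_at_right/cvgr_to_le : derivable f x v by exact: diff_derivable.
apply; near=> t.
have t_gt0 : 0 < t by near: t; exact: nbhs_right_gt.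
have t_le1 : t <= 1 by near: t; apply/nbhs_right_le/ltr01.
have t01 : 0 <= t <= 1 by apply/andP; split; lra.
have := f_convex z_ge0 (ltW x_gt0) t01.
rewrite (_ : t * z + (1 - t) * x = t * v + x); last by rewrite /v; ring.
move=> le_chord /=; rewrite ler_pdivrMl //; lra.
Unshelve. all: by end_near. Qed.

Lemma derive1_nondecreasing x y : 0 < x -> x <= y -> derive1 f x <= derive1 f y.
Proof.
move=> x_gt0 le_xy.
have y_gt0 := lt_le_trans x_gt0 le_xy.
have tan_x := convex_tangent_le x_gt0 (ltW y_gt0).
have tan_y := convex_tangent_le y_gt0 (ltW x_gt0).
have [->|lt_xy] := eqVneq x y; first by [].
have : 0 <= (y - x) * (derive1 f y - derive1 f x) by lra.
by rewrite pmulr_rge0 ?subr_ge0 // subr_gt0 lt_neqAle lt_xy.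
Qed.

(* A convex function lying above its chord at the midpoint is affine on the left half
   of the chord, so its derivative is constant there. *)
Lemma chord_le_flat_midpoint lo hi x : 0 <= lo -> lo < x -> x <= (lo + hi) / 2 ->
  (f lo + f hi) / 2 <= f ((lo + hi) / 2) ->
  f lo + (f hi - f lo) / (hi - lo) * (x - lo) <= f x.
Proof.
move=> lo_ge0 lo_x x_mid flat_mid; set t := (hi - (lo + hi) / 2) / (hi - x).
have hi_ge0 : 0 <= hi by lra.
have t_gt0 : 0 < t by rewrite divr_gt0 //; lra.
have t01 : 0 <= t <= 1 by apply/andP; split; rewrite ?ler_pdivrMr ?mul1r; lra.
have := f_convex (ltW (le_lt_trans lo_ge0 lo_x)) hi_ge0 t01.
rewrite (_ : t * x + (1 - t) * hi = (lo + hi) / 2); last by rewrite /t; field; lra.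
have chordE : t * (f lo + (f hi - f lo) / (hi - lo) * (x - lo)) + (1 - t) * f hi
   = (f lo + f hi) / 2 by rewrite /t; field; lra.
move=> /(le_trans flat_mid) le_mid.
by rewrite -(ler_pM2l t_gt0); lra.
Qed.

Lemma derive1_flat_midpoint lo hi x : 0 <= lo -> lo < x -> x <= (lo + hi) / 2 ->
  (f lo + f hi) / 2 <= f ((lo + hi) / 2) ->
  derive1 f x = (f hi - f lo) / (hi - lo).
Proof.
move=> lo_ge0 lo_x x_mid flat_mid; have x_gt0 := le_lt_trans lo_ge0 lo_x.
have hi_ge0 : 0 <= hi by lra.
have := chord_le_flat_midpoint lo_ge0 lo_x x_mid flat_mid.
have := convex_tangent_le x_gt0 lo_ge0.
have := convex_tangent_le x_gt0 hi_ge0.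
have f_hi : f hi = f lo + (f hi - f lo) / (hi - lo) * (hi - lo) by field; lra.
move: f_hi; set s := (f hi - f lo) / (hi - lo); set d := derive1 f x.
move=> f_hi tan_hi tan_lo chord.
have : (x - lo) * (s - d) <= 0 by lra.
rewrite pmulr_rle0 ?subr_gt0 // => le_sd.
have : (hi - x) * (d - s) <= 0 by lra.
rewrite pmulr_rle0 ?subr_gt0 => [le_ds|]; lra.
Qed.

Lemma x0_of_le_flat_midpoint lo hi : 0 <= lo -> lo < hi ->
  (f lo + f hi) / 2 <= f ((lo + hi) / 2) -> (x0_of f <= lo%:E)%E.
Proof.
move=> lo_ge0 lt_lo_hi flat_mid.
have lo_mid : lo < (lo + hi) / 2 by lra.
apply: (lee_gt_itv lo_mid) => x /andP[lo_x x_mid].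
apply: ereal_inf_lbound; exists x => //; split; first lra.
apply: rderiv_near_cst; near=> h.
have h_gt0 : 0 < h by near: h; exact: nbhs_right_gt.
have h_lt : h < (lo + hi) / 2 - x by near: h; apply: nbhs_right_lt; lra.
rewrite /tau_d ifT ?ifT; try lra.
by rewrite !(@derive1_flat_midpoint lo hi) //; lra.
Unshelve. all: by end_near. Qed.

End ConvexOnNonneg.

Lemma le_midpoint_of_sqr (R : realFieldType) (a b c e : R) :
  0 <= a -> 0 <= b -> 0 <= c -> `|a - b| <= e ->
  c ^+ 2 <= 2^-1 * a ^+ 2 + 2^-1 * b ^+ 2 - 4^-1 * e ^+ 2 -> c <= (a + b) / 2.
Proof.
move=> a_ge0 b_ge0 c_ge0 ab_le_e c_sqr.
have ab_sqr : (a - b) ^+ 2 <= e ^+ 2.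
  by rewrite -real_normK ?num_real // ler_sqr ?nnegrE // (le_trans _ ab_le_e).
by rewrite -ler_sqr ?nnegrE //; lra.
Qed.

Lemma lt_midpoint_of_sqr (R : realFieldType) (a b c e : R) :
  0 <= a -> 0 <= b -> 0 <= c -> `|a - b| < e ->
  c ^+ 2 <= 2^-1 * a ^+ 2 + 2^-1 * b ^+ 2 - 4^-1 * e ^+ 2 -> c < (a + b) / 2.
Proof.
move=> a_ge0 b_ge0 c_ge0 ab_lt_e c_sqr.
have ab_sqr : (a - b) ^+ 2 < e ^+ 2.
  by rewrite -real_normK ?num_real // ltr_sqr ?nnegrE // (le_trans _ (ltW ab_lt_e)).
by rewrite -ltr_sqr ?nnegrE //; lra.
Qed.

Section S0plusTheory.
Variables (R : realType) (tau : R -> R).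
Hypothesis tauS : S0plus tau.

Lemma S0plus_nondecreasing x y : 0 <= x -> x <= y -> tau x <= tau y.
Proof. by case: tauS => + _; apply. Qed.

Lemma S0plus_convex x y t : 0 <= x -> 0 <= y -> 0 <= t <= 1 ->
  tau (t * x + (1 - t) * y) <= t * tau x + (1 - t) * tau y.
Proof. by case: tauS => _ [+ _]; apply. Qed.

Lemma S0plus_derivable x : 0 < x -> derivable tau x 1.
Proof. by case: tauS => _ [_ [+ _]]; apply. Qed.

Lemma S0plus_derive1_gt0 x : 0 < x -> 0 < derive1 tau x.
Proof. by case: tauS => _ [_ [_ [_ [_ +]]]]; apply. Qed.

Lemma S0plus_lt x y : 0 <= x -> x < y -> tau x < tau y.
Proof.
move=> x_ge0 lt_xy; set c := (x + y) / 2.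
have c_gt0 : 0 < c by rewrite /c; lra.
have tan_c := convex_tangent_le S0plus_convex S0plus_derivable c_gt0
  (ltW (le_lt_trans x_ge0 lt_xy)).
have slope_gt0 : 0 < (y - c) * derive1 tau c.
  by rewrite mulr_gt0 ?S0plus_derive1_gt0 // /c; lra.
have le_xc : tau x <= tau c by apply: S0plus_nondecreasing => //; rewrite /c; lra.
lra.
Qed.

Lemma cvg_derive1_at_right0 : cvg (derive1 tau x @[x --> 0^'+]).
Proof.
apply: nondecreasing_at_right_is_cvgr; apply: nearW => b.
- move=> u v; rewrite in_itv /= => /andP[u_gt0 _] _ le_uv.
  exact: (derive1_nondecreasing S0plus_convex S0plus_derivable u_gt0 le_uv).
- exists 0 => y [u]; rewrite /= in_itv /= => /andP[u_gt0 _] <-.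
  exact/ltW/S0plus_derive1_gt0.
Qed.

Lemma tau_d_ge0 x : 0 <= tau_d tau x.
Proof.
rewrite /tau_d; case: ifPn => x_gt0; first exact/ltW/S0plus_derive1_gt0.
apply: limr_ge; first exact: cvg_derive1_at_right0.
by near=> u; apply/ltW/S0plus_derive1_gt0; near: u; exact: nbhs_right_gt.
Unshelve. all: by end_near. Qed.

Lemma tau_d_nondecreasing : nondecreasing_fun (tau_d tau).
Proof.
have mono := derive1_nondecreasing S0plus_convex S0plus_derivable.
move=> u v le_uv; rewrite /tau_d; case: ifPn => u_gt0; case: ifPn => v_gt0.
- exact: mono.
- by move: v_gt0; rewrite (lt_le_trans u_gt0 le_uv).
- apply: limr_le; first exact: cvg_derive1_at_right0.
  near=> w; apply: mono; first by near: w; exact: nbhs_right_gt.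
  by apply/ltW; near: w; exact: nbhs_right_lt.
- by [].
Unshelve. all: by end_near. Qed.

Lemma S0plus_midpoint_lt a b : 0 <= a -> 0 <= b -> a != b ->
  (a%:E < x0_of tau)%E -> tau ((a + b) / 2) < (tau a + tau b) / 2.
Proof.
move=> a_ge0 b_ge0 neq_ab a_lt_x0; rewrite ltNge; apply/negP => flat.
have x0_le := x0_of_le_flat_midpoint S0plus_convex S0plus_derivable.
move: neq_ab; rewrite neq_lt => /orP[lt_ab|lt_ba].
- by move: (x0_le _ _ a_ge0 lt_ab flat); rewrite leNgt a_lt_x0.
- move: flat; rewrite [a + b]addrC [tau a + _]addrC => /(x0_le _ _ b_ge0 lt_ba).
  by rewrite leNgt (lt_trans _ a_lt_x0) ?lte_fin.
Qed.

Lemma S0plus_hadamard_midpoint a b c e : 0 <= a -> 0 <= b -> 0 <= c -> 0 < e ->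
  `|a - b| <= e -> c ^+ 2 <= 2^-1 * a ^+ 2 + 2^-1 * b ^+ 2 - 4^-1 * e ^+ 2 ->
  tau c <= (tau a + tau b) / 2 /\
  ((a%:E < x0_of tau)%E -> tau c < (tau a + tau b) / 2).
Proof.
move=> a_ge0 b_ge0 c_ge0 e_gt0 ab_le_e c_sqr.
have c_mid := le_midpoint_of_sqr a_ge0 b_ge0 c_ge0 ab_le_e c_sqr.
have tau_mid : tau ((a + b) / 2) <= (tau a + tau b) / 2.
  have half01 : 0 <= (1 / 2 : R) <= 1 by apply/andP; split; lra.
  have := S0plus_convex a_ge0 b_ge0 half01.
  by rewrite (_ : 1 / 2 * a + (1 - 1 / 2) * b = (a + b) / 2); [lra|field].
have tau_c : tau c <= tau ((a + b) / 2) by exact: S0plus_nondecreasing.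
split; first exact: le_trans tau_c tau_mid.
move=> a_lt_x0; have [eq_ab|neq_ab] := eqVneq a b.
- have lt_c_mid : c < (a + b) / 2.
    by apply: (lt_midpoint_of_sqr a_ge0 b_ge0 c_ge0 _ c_sqr); rewrite eq_ab subrr normr0.
  by apply: lt_le_trans tau_mid; exact: S0plus_lt.
- by apply: le_lt_trans tau_c _; exact: S0plus_midpoint_lt.
Qed.

End S0plusTheory.

Section IntegralFacts.
Context d (T : measurableType d) (R : realType) (mu : {measure set T -> \bar R}).

Lemma integral_gt0 (k : T -> R) (A : set T) :
  measurable A -> (0 < mu A)%E -> measurable_fun setT k ->
  (forall w, 0 <= k w) -> (forall w, A w -> 0 < k w) ->
  (0 < \int[mu]_w (k w)%:E)%E.
Proof.
move=> mA muA_gt0 mk k_ge0 k_gt0.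
rewrite lt0e integral_ge0 ?andbT; last by move=> w _; rewrite lee_fin.
apply/eqP => int_k0.
have : ae_eq mu setT (EFin \o k) (cst 0%E).
  apply/ae_eq_integral_abs => //; first exact/measurable_EFinP.
  by rewrite -int_k0; apply: eq_integral => w _; rewrite gee0_abs ?lee_fin.
case=> N [mN muN0 sub_N].
have A_sub_N : A `<=` N.
  by move=> w Aw; apply: sub_N => /(_ I) /= /eqP; rewrite eqe gt_eqF ?k_gt0.
have := le_measure mu (mem_set mA) (mem_set mN) A_sub_N.
by rewrite [X in (_ <= X)%E]muN0 leNgt muA_gt0.
Qed.

Lemma lt_integral (g1 g2 : T -> R) (A : set T) :
  mu.-integrable setT (EFin \o g1) -> mu.-integrable setT (EFin \o g2) ->
  measurable A -> (0 < mu A)%E ->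
  (forall w, g1 w <= g2 w) -> (forall w, A w -> g1 w < g2 w) ->
  (\int[mu]_w (g1 w)%:E < \int[mu]_w (g2 w)%:E)%E.
Proof.
move=> int1 int2 mA muA_gt0 le12 lt12.
have m1 := measurable_int mu int1; have m2 := measurable_int mu int2.
rewrite -sube_gt0 -integralB_EFin //; under eq_integral do rewrite -EFinB.
apply: (integral_gt0 mA muA_gt0).
- by apply: measurable_funB; apply/measurable_EFinP.
- by move=> w; rewrite subr_ge0.
- by move=> w /lt12; rewrite subr_gt0.
Qed.

Lemma integrable_lbound_lty (k g : T -> R) :
  mu.-integrable setT (EFin \o k) -> measurable_fun setT g ->
  (forall w, k w <= g w) -> (\int[mu]_w (g w)%:E < +oo)%E ->
  mu.-integrable setT (EFin \o g).
Proof.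
move=> /integrableP[mk k_lty] mg le_kg g_lty.
have mG : measurable_fun setT (EFin \o g) by exact/measurable_EFinP.
have neg_lty : (\int[mu]_w (EFin \o g)^\- w < +oo)%E.
  apply: le_lt_trans k_lty; apply: ge0_le_integral => //.
  - exact: measurable_funeneg.
  - exact: measurableT_comp.
  move=> w _; rewrite funenegE /= ge_max !lee_fin normr_ge0 andbT.
  by rewrite ler_normr lerN2 le_kg orbT.
have neg_fin : (\int[mu]_w (EFin \o g)^\- w \is a fin_num)%E.
  by rewrite ge0_fin_numE // integral_ge0 // => w _; exact: funeneg_ge0.
have pos_lty : (\int[mu]_w (EFin \o g)^\+ w < +oo)%E.
  rewrite -(subeK (\int[mu]_w (EFin \o g)^\+ w) neg_fin) lte_add_pinfty //.
  by rewrite -integralE.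
apply/integrableP; split => //.
rewrite integral_fin_num_abs // integralE fin_numB neg_fin andbT.
by rewrite ge0_fin_numE // integral_ge0 // => w _; exact: funepos_ge0.
Qed.

Lemma integrable_sandwich (lo hi g : T -> R) :
  mu.-integrable setT (EFin \o lo) -> mu.-integrable setT (EFin \o hi) ->
  measurable_fun setT g -> (forall w, lo w <= g w <= hi w) ->
  mu.-integrable setT (EFin \o g).
Proof.
move=> int_lo int_hi mg lo_g_hi.
apply: (le_integrable measurableT _ _
  (integrableD measurableT (integrable_norm int_lo) (integrable_norm int_hi))).
  exact/measurable_EFinP.
move=> w _ /=; rewrite lee_fin [X in _ <= X]ger0_norm ?addr_ge0 // ler_norml.
have /andP[lo_g g_hi] := lo_g_hi w.
have := ler_norm (- lo w); have := ler_norm (hi w).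
have := normr_ge0 (lo w); have := normr_ge0 (hi w).
by rewrite normrN => *; apply/andP; split; lra.
Qed.

Lemma integrable_midpoint (g1 g2 : T -> R) :
  mu.-integrable setT (EFin \o g1) -> mu.-integrable setT (EFin \o g2) ->
  mu.-integrable setT (EFin \o (fun w => (g1 w + g2 w) / 2)).
Proof.
move=> int1 int2; apply: (eq_integrable measurableT _ _ _
  (integrableZl measurableT 2^-1 (integrableD measurableT int1 int2))).
by move=> w _; rewrite /= -EFinD -EFinM mulrC.
Qed.

Lemma integral_midpoint (g1 g2 : T -> R) :
  mu.-integrable setT (EFin \o g1) -> mu.-integrable setT (EFin \o g2) ->
  (\int[mu]_w ((g1 w + g2 w) / 2)%:E =
     2^-1%:E * (\int[mu]_w (g1 w)%:E + \int[mu]_w (g2 w)%:E))%E.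
Proof.
move=> int1 int2; rewrite -integralD_EFin // -integralZl //; last first.
  by apply: (eq_integrable measurableT _ _ _ (integrableD measurableT int1 int2)).
by apply: eq_integral => w _; rewrite -EFinD -EFinM mulrC.
Qed.

End IntegralFacts.

Section MetricFacts.
Variables (R : realType) (Q : Type) (d : Q -> Q -> R).
Hypothesis d_metric : is_metric d.

Lemma dist_ge0 x y : 0 <= d x y.
Proof. by case: d_metric. Qed.

Lemma dist_eq0 x y : d x y = 0 -> x = y.
Proof. by case: d_metric => _ [+ _] => /(_ x y) []. Qed.

Lemma dist_sym x y : d x y = d y x.
Proof. by case: d_metric => _ [_ []]. Qed.

Lemma dist_triangle x y z : d x z <= d x y + d y z.
Proof. by case: d_metric => _ [_ [_]]. Qed.

Lemma dist_sub_le x y z : `|d z x - d z y| <= d x y.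
Proof.
have := dist_triangle z x y; have := dist_triangle z y x.
by rewrite [d y x]dist_sym ler_norml => *; apply/andP; split; lra.
Qed.

End MetricFacts.

Lemma measurable_comp_nondecreasing_ge0 d (T : measurableType d) (R : realType)
    (phi : R -> R) (g : T -> R) :
  (forall x y, 0 <= x -> x <= y -> phi x <= phi y) ->
  measurable_fun setT g -> (forall w, 0 <= g w) -> measurable_fun setT (phi \o g).
Proof.
move=> phi_nd mg g_ge0.
have -> : phi \o g = (phi \o Num.max 0) \o g.
  by apply/funext => w /=; rewrite max_r.
apply: measurableT_comp mg; apply: nondecreasing_measurable => // x y le_xy /=.
by apply: phi_nd; [rewrite le_max lexx|apply: le_max2].
Qed.

Section FrechetMean.
Context (R : realType) (Q : Type) (d : Q -> Q -> R) (dO : measure_display)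
  (Omega : measurableType dO) (P : probability Omega R) (Y : Omega -> Q) (o : Q)
  (tau : R -> R).
Hypotheses (d_metric : is_metric d) (Y_rv : random_variable_in d Y)
  (tauS : S0plus tau) (tau_d_lty : (\int[P]_w (tau_d tau (d (Y w) o))%:E < +oo)%E).

Definition loss (q : Q) (w : Omega) : R := tau (d (Y w) q) - tau (d (Y w) o).

Definition dtau_o (w : Omega) : R := tau_d tau (d (Y w) o).

Lemma measurable_dist q : measurable_fun setT (fun w => d (Y w) q).
Proof.
apply: (measurability _ (RGenInftyO.measurableE R)) => //.
move=> _ [_ [x ->] <-]; rewrite setTI.
have -> : (fun w => d (Y w) q) @^-1` `]-oo, x[ = Y @^-1` [set p | d p q < x].
  by apply/seteqP; split => w /=; rewrite in_itv.
apply: Y_rv => p /= lt_pqx; exists (x - d p q); split; first lra.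
by move=> y; have := dist_triangle d_metric y p q; rewrite (dist_sym d_metric y p); lra.
Qed.

Lemma measurable_loss q : measurable_fun setT (loss q).
Proof.
have mtau q' : measurable_fun setT (tau \o (fun w => d (Y w) q')).
  apply: measurable_comp_nondecreasing_ge0 (measurable_dist q') _.
    exact: S0plus_nondecreasing.
  by move=> w; exact: dist_ge0.
exact: measurable_funB (mtau q) (mtau o).
Qed.

Lemma integrable_dtau_o : P.-integrable setT (EFin \o dtau_o).
Proof.
apply/integrableP; split.
  apply/measurable_EFinP/(measurableT_comp _ (measurable_dist o)).
  exact: nondecreasing_measurable (tau_d_nondecreasing tauS).
by under eq_integral do rewrite /= ger0_norm ?tau_d_ge0 //.
Qed.

(* An integrable minorant of the loss: it is what makes the objective finite at a mean. *)
Lemma loss_ge q w : - (d o q * dtau_o w) <= loss q w.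
Proof.
rewrite /loss /dtau_o; set x := d (Y w) o; set y := d (Y w) q.
have x_ge0 : 0 <= x by exact: dist_ge0.
have oq_ge0 : 0 <= d o q by exact: dist_ge0.
have xy_le : x <= y + d o q.
  by rewrite /x /y (dist_sym d_metric o q); exact: dist_triangle.
have [le_xy|lt_yx] := leP x y.
  have : 0 <= d o q * tau_d tau x by rewrite mulr_ge0 ?tau_d_ge0.
  by have := S0plus_nondecreasing tauS x_ge0 le_xy; lra.
have x_gt0 : 0 < x by apply: le_lt_trans lt_yx; exact: dist_ge0.
have := convex_tangent_le (S0plus_convex tauS) (S0plus_derivable tauS) x_gt0
  (dist_ge0 d_metric (Y w) q).
have := tau_d_ge0 tauS x; rewrite /tau_d x_gt0 -/y => ? ?; nra.
Qed.

Lemma integrable_loss_lbound q :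
  P.-integrable setT (EFin \o (fun w => - (d o q * dtau_o w))).
Proof.
apply: (eq_integrable measurableT _ _ _
  (integrableZl measurableT (- d o q) integrable_dtau_o)).
by move=> w _; rewrite /= -EFinM mulNr.
Qed.

Lemma frechet_mean_integrable m :
  is_tau_frechet_mean P d tau Y o m -> P.-integrable setT (EFin \o loss m).
Proof.
move=> m_mean; apply: (integrable_lbound_lty (integrable_loss_lbound m) (measurable_loss m)
  (loss_ge m)).
apply: le_lt_trans (m_mean o) _; rewrite /frechet_obj.
by under eq_integral do rewrite subrr; rewrite integral0 ltry.
Qed.

Section Midpoint.
Variables m m' z : Q.
Hypotheses (neq_mm' : m' <> m) (z_mid : forall q,
  2^-1 * d m q ^+ 2 + 2^-1 * d m' q ^+ 2 - 4^-1 * d m m' ^+ 2 >= d q z ^+ 2).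

Lemma loss_midpoint_le w :
  loss z w <= (loss m w + loss m' w) / 2 /\
  (((d (Y w) m)%:E < x0_of tau)%E -> loss z w < (loss m w + loss m' w) / 2).
Proof.
have mm'_gt0 : 0 < d m m'.
  rewrite lt_neqAle dist_ge0 // andbT; apply/eqP => /esym/(dist_eq0 d_metric) eq_mm'.
  exact: neq_mm' (esym eq_mm').
have := z_mid (Y w); rewrite !(dist_sym d_metric _ (Y w)) => z_sqr.
have := S0plus_hadamard_midpoint tauS (dist_ge0 d_metric _ _) (dist_ge0 d_metric _ _)
  (dist_ge0 d_metric _ _) mm'_gt0 (dist_sub_le d_metric _ _ _) z_sqr.
by rewrite /loss; case=> le_mid lt_mid; split => [|/lt_mid]; lra.
Qed.

Lemma frechet_mean_midpoint_lt :
  P.-integrable setT (EFin \o loss m) -> P.-integrable setT (EFin \o loss m') ->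
  (0 < P [set w | ((d (Y w) m)%:E < x0_of tau)%E])%E ->
  (\int[P]_w (loss z w)%:E <
     2^-1%:E * (\int[P]_w (loss m w)%:E + \int[P]_w (loss m' w)%:E))%E.
Proof.
move=> int_m int_m' P_pos.
have int_avg := integrable_midpoint int_m int_m'.
have int_z : P.-integrable setT (EFin \o loss z).
  apply: integrable_sandwich (integrable_loss_lbound z) int_avg (measurable_loss z) _.
  by move=> w; rewrite loss_ge; have [] := loss_midpoint_le w.
rewrite -integral_midpoint //; apply: lt_integral int_z int_avg _ P_pos _ _.
- rewrite -[X in measurable X]setTI; apply: measurable_lte => //.
  exact/measurable_EFinP/measurable_dist.
- by move=> w; have [] := loss_midpoint_le w.
- by move=> w /(proj2 (loss_midpoint_le w)).
Qed.

End Midpoint.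

Lemma frechet_mean_unique m m' :
  (forall y0 y1 : Q, exists z : Q, forall q : Q,
    2^-1 * d y0 q ^+ 2 + 2^-1 * d y1 q ^+ 2 - 4^-1 * d y0 y1 ^+ 2 >= d q z ^+ 2) ->
  is_tau_frechet_mean P d tau Y o m -> is_tau_frechet_mean P d tau Y o m' ->
  (0 < P [set w | ((d (Y w) m)%:E < x0_of tau)%E])%E -> m' = m.
Proof.
move=> hadamard m_mean m'_mean P_pos; apply: contrapT => neq_mm'.
have [z z_mid] := hadamard m m'.
have int_m := frechet_mean_integrable m_mean.
have int_m' := frechet_mean_integrable m'_mean.
have := frechet_mean_midpoint_lt neq_mm' z_mid int_m int_m' P_pos.
have := m_mean z; have := m_mean m'; have := m'_mean m; rewrite /frechet_obj.
move: (integrable_fin_num measurableT int_m) (integrable_fin_num measurableT int_m').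
case: (\int[P]_w _)%E => [F| |] //; case: (\int[P]_w _)%E => [G| |] //.
case: (\int[P]_w _)%E => [H| |] // _ _; rewrite !lee_fin -EFinD -EFinM lte_fin; lra.
Qed.

End FrechetMean.

Lemma x0_of_pinfty (R : realType) (tau : R -> R) :
  (forall x, 0 < x -> 0 < rderiv (tau_d tau) x) -> x0_of tau = +oo%E.
Proof.
move=> rderiv_gt0; rewrite /x0_of (_ : [set _ | _ in _] = set0) ?ereal_inf0 //.
by apply/seteqP; split => // y [x [x_gt0 /eqP]]; rewrite gt_eqF ?rderiv_gt0.
Qed.

Theorem mainTheorem7 (R : realType) (Q : Type) (d : Q -> Q -> R)
  (dO : measure_display) (Omega : measurableType dO) (P : probability Omega R)
  (Y : Omega -> Q) (o : Q) (tau : R -> R) (m : Q) :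
  hadamard_space d ->
  random_variable_in d Y ->
  S0plus tau ->
  (\int[P]_w (tau_d tau (d (Y w) o))%:E < +oo)%E ->
  is_tau_frechet_mean P d tau Y o m ->
  ((0 < P [set w | ((d (Y w) m)%:E < x0_of tau)%E])%E ->
     forall m' : Q, is_tau_frechet_mean P d tau Y o m' -> m' = m) /\
  ((forall x : R, 0 < x -> 0 < rderiv (tau_d tau) x) ->
     forall m' : Q, is_tau_frechet_mean P d tau Y o m' -> m' = m).
Proof.
case=> d_metric [_ hadamard] Y_rv tauS tau_d_lty m_mean.
have unique := frechet_mean_unique d_metric Y_rv tauS tau_d_lty hadamard m_mean.
split=> [P_pos m' m'_mean | rderiv_gt0 m' m'_mean]; first exact: unique.
apply: unique m'_mean _; rewrite x0_of_pinfty //.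
rewrite (_ : [set w | _] = setT) ?probability_setT ?lte01 //.
by apply/seteqP; split => // w _; exact: ltey.
Qed.
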